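(* Let $G=(V,E)$ be a $d$-regular $\epsilon$-spectral expander on $2n$ vertices with $0<\epsilon<1/2$ and $\epsilon n$ an integer. Then the number $m((1-\epsilon)n)$ of matchings of $G$ with exactly $(1-\epsilon)n$ edges satisfies $$m((1-\epsilon)n)\geq\left(\frac de\right)^{n(1-\epsilon)}e^{-2\epsilon n}.$$
   Context: For a graph on $2n$ vertices with adjacency matrix $A$ and degree matrix $D$, $\tilde A=D^{-1/2}AD^{-1/2}$ has eigenvalues $\lambda_1\geq\dots\geq\lambda_{2n}$, $\sigma_2(\tilde A)=\max\{\lambda_2,|\lambda_{2n}|\}$, and the graph is an $\epsilon$-spectral expander if $\sigma_2(\tilde A)\leq\epsilon$. *)

From mathcomp Require Import all_boot all_order all_algebra.
From mathcomp Require Import all_classical all_reals all_analysis.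
Set Implicit Arguments. Unset Strict Implicit. Unset Printing Implicit Defensive.
Import Order.TTheory GRing.Theory Num.Theory.
Local Open Scope ring_scope.

Definition simple_graph (N : nat) (e : rel 'I_N) : Prop :=
  irreflexive e /\ symmetric e.

Definition deg (N : nat) (e : rel 'I_N) (v : 'I_N) : nat := #|[set u | e v u]|.

Definition regular (N : nat) (e : rel 'I_N) (d : nat) : Prop :=
  forall v, deg e v = d.

Definition adjmx (R : realType) (N : nat) (e : rel 'I_N) : 'M[R]_N :=
  \matrix_(i, j) (e i j)%:R.

(* D^{-1/2} A D^{-1/2}, entrywise A_ij / (sqrt d_i * sqrt d_j) *)
Definition norm_adjmx (R : realType) (N : nat) (e : rel 'I_N) : 'M[R]_N :=
  \matrix_(i, j) (adjmx R e i j / (Num.sqrt (deg e i)%:R * Num.sqrt (deg e j)%:R)).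

(* sigma_2(M) <= eps, where the eigenvalues of M (with multiplicity, i.e. the
   roots of the characteristic polynomial) are lambda_1 >= ... >= lambda_N
   and sigma_2 = max(lambda_2, |lambda_N|). *)
Definition sigma2_le (R : realType) (N : nat) (M : 'M[R]_N) (eps : R) : Prop :=
  exists s : seq R,
    [/\ size s = N, sorted (>=%R) s,
        char_poly M = \prod_(x <- s) ('X - x%:P)
      & Num.max (nth 0 s 1) `|nth 0 s N.-1| <= eps].

Definition spectral_expander (R : realType) (N : nat) (e : rel 'I_N) (eps : R)
  : Prop := sigma2_le (norm_adjmx R e) eps.

Definition edge_set (N : nat) (e : rel 'I_N) : {set {set 'I_N}} :=
  [set [set u; v] | u in 'I_N, v in 'I_N & e u v].

Definition is_matching (N : nat) (e : rel 'I_N) (M : {set {set 'I_N}}) : bool :=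
  (M \subset edge_set e) && finset.trivIset M.

Definition nmatchings (N : nat) (e : rel 'I_N) (j : nat) : nat :=
  #|[set M : {set {set 'I_N}} | is_matching e M && (#|M| == j)]|.

From mathcomp Require Import all_boot all_order all_algebra.
From mathcomp Require Import all_classical all_reals all_analysis.
From mathcomp.real_closed Require Import complex.
From mathcomp Require Import ring lra zify.
Set Implicit Arguments. Unset Strict Implicit. Unset Printing Implicit Defensive.
Import Order.TTheory GRing.Theory Num.Theory.

(* Write N = 2n and fix a matching M with i edges.  The set S of
   the 2(n - i) vertices left uncovered by M spans many edges: testing the
   normalized adjacency matrix, whose eigenvalues are all >= -eps, against
   the centred indicator vector of S gives at least
   d (|S|^2/N - eps |S| (1 - |S|/N)) >= 2d(n - i)(n - k - i)/n ordered edges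
   inside S.  Each of them extends M to a matching with i + 1 edges, and every
   such matching arises at most 2(i + 1) times, so
   m(i) d (n - i)(n - k - i) <= m(i + 1) (i + 1) n.
   Chaining these from m(0) = 1 up to j = n - k yields
   d^j n^_j <= m(j) n^j, and n^_j >= n^j e^-n (from n^n <= n! e^n) ends the
   proof. *)

(* classical_sets, imported with MathComp-Analysis, shadows these names. *)
Local Notation cover := finset.cover.
Local Notation partition := finset.partition.
Local Notation trivIset := finset.trivIset.
Local Notation trivIsetP := finset.trivIsetP.
Local Notation set0 := finset.set0.
Local Notation subsetP := fintype.subsetP.
Local Notation sub0set := finset.sub0set.
Local Notation subUset := finset.subUset.
Local Notation sub1set := finset.sub1set.

Lemma card_dep_pairs (A B : finType) (X : {set A}) (Y : A -> {set B}) :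
  #|[set q : A * B | (q.1 \in X) && (q.2 \in Y q.1)]| = (\sum_(a in X) #|Y a|)%N.
Proof.
rewrite -sum1_card (eq_bigr (fun a => \sum_(b in Y a) 1)%N) => [|a _]; last first.
  by rewrite sum1_card.
by rewrite pair_big_dep; apply: eq_bigl => -[a b]; rewrite inE.
Qed.

Lemma prod_chain_le (f a b : nat -> nat) (j : nat) :
  (forall i, (i < j)%N -> (f i * a i <= f i.+1 * b i)%N) ->
  (f 0 * \prod_(i < j) a i <= f j * \prod_(i < j) b i)%N.
Proof.
elim: j => [|j IH] step; first by rewrite !big_ord0.
rewrite !big_ord_recr /= !mulnA.
apply: (@leq_trans (f j * \prod_(i < j) b i * a j)).
  by rewrite leq_mul2r IH ?orbT // => i /ltnW; apply: step.
by rewrite mulnAC [X in (_ <= X)%N]mulnAC leq_mul2r step ?orbT.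
Qed.

Section Matchings.
Variables (N : nat) (e : rel 'I_N).
Hypothesis e_irr : irreflexive e.
Local Notation T := 'I_N.

Definition matchings (i : nat) : {set {set {set T}}} :=
  [set M | is_matching e M && (#|M| == i)].

Definition arcs_within (S : {set T}) : {set T * T} :=
  [set p | [&& e p.1 p.2, p.1 \in S & p.2 \in S]].

Lemma edge_setP (A : {set T}) :
  A \in edge_set e -> exists u v, [/\ e u v, u != v & A = [set u; v]].
Proof.
case/imset2P => u v _; rewrite inE => euv ->; exists u, v; split => //.
by apply: contraTneq euv => ->; rewrite e_irr.
Qed.

Lemma set0_notin_matching M : is_matching e M -> set0 \notin M.
Proof.
case/andP => /subsetP sub _; apply/negP => /sub /edge_setP [u [v [_ _]]].
by move/setP/(_ u); rewrite !inE eqxx.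
Qed.

Lemma card_cover_matching M : is_matching e M -> #|cover M| = (#|M| * 2)%N.
Proof.
move=> Mm; have /andP[/subsetP sub tiM] := Mm.
apply: card_uniform_partition.
  by move=> A /sub /edge_setP [u [v [_ uv ->]]]; rewrite cards2 uv.
by rewrite /partition eqxx tiM set0_notin_matching.
Qed.

Lemma notin_cover (M : {set {set T}}) (u : T) (B : {set T}) :
  u \notin cover M -> B \in M -> u \notin B.
Proof. by move=> uM BM; apply: contra uM => uB; apply/bigcupP; exists B. Qed.

Lemma matching_setU1 (M : {set {set T}}) (u v : T) : is_matching e M -> e u v ->
  u \notin cover M -> v \notin cover M ->
  is_matching e ([set u; v] |: M) /\ [set u; v] \notin M.
Proof.
move=> Mm euv uM vM; have /andP[sub tiM] := Mm.
have [ti uvM] : trivIset ([set u; v] |: M) /\ [set u; v] \notin M.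
  apply: trivIsetU1 => //; last exact: set0_notin_matching.
  move=> B BM; rewrite -setI_eq0; apply/eqP/setP => x; rewrite !inE.
  by apply/negP => /andP[/orP[] /eqP -> ]; apply/negP; apply: notin_cover BM.
split=> //; rewrite /is_matching ti andbT subUset sub andbT sub1set.
by apply/imset2P; exists u v; rewrite ?inE.
Qed.

Definition oriented_pairs (M : {set {set T}}) : {set T * T} :=
  [set p | (p.1 != p.2) && ([set p.1; p.2] \in M)].

Lemma card_oriented_pairs_le (M : {set {set T}}) :
  (#|oriented_pairs M| <= 2 * #|M|)%N.
Proof.
pose g (p : T * T) := ([set p.1; p.2], (p.1 < p.2)%N).
rewrite /oriented_pairs -[2]card_bool -cardsT mulnC -cardsX.
rewrite -(card_in_imset (f := g)).
  apply: subset_leq_card; apply/subsetP => _ /imsetP [p + ->].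
  by rewrite !inE /= => /andP[_ ->].
move=> [u v] [u' v']; rewrite !inE /= => /andP[uv _] /andP[uv' _] [E lt].
have : u' \in [set u; v] by rewrite E !inE eqxx.
have : v' \in [set u; v] by rewrite E !inE eqxx orbT.
rewrite !inE => /orP[] /eqP Ev /orP[] /eqP Eu; subst; rewrite ?eqxx in uv' *; try done.
by move: lt uv; case: ltngtP => // /val_inj ->; rewrite eqxx.
Qed.

(* Count the pairs (M, (u, v)) with M an i-matching and uv an edge between
   vertices uncovered by M: adding uv to M maps them injectively to pairs
   (M', (u, v)) with M' an (i+1)-matching containing uv, and each M' contains
   at most 2(i+1) such oriented edges. *)
Lemma sum_arcs_uncovered_le i :
  (\sum_(M in matchings i) #|arcs_within (~: cover M)|
     <= 2 * i.+1 * #|matchings i.+1|)%N.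
Proof.
pose add_edge (q : {set {set T}} * (T * T)) := ([set q.2.1; q.2.2] |: q.1, q.2).
rewrite -card_dep_pairs.
apply: (@leq_trans
  #|[set q | (q.1 \in matchings i.+1) && (q.2 \in oriented_pairs q.1)]|).
  rewrite -(card_in_imset (f := add_edge)); last first.
    move=> [M1 [u v]] [M2 [u2 v2]]; rewrite !inE /= => /andP[_] /and3P[_ uM1 _].
    move=> /andP[_] /and3P[_ uM2 _] [EM Eu Ev]; subst u2 v2.
    have uvM (M : {set {set T}}) : u \notin cover M -> [set u; v] \notin M.
      by move=> uM; apply/negP => /(notin_cover uM); rewrite !inE eqxx.
    by rewrite -(setU1K (uvM _ uM1)) EM setU1K ?uvM.
  apply: subset_leq_card; apply/subsetP => _ /imsetP [[M [u v]] + ->].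
  rewrite !inE /= => /andP[/andP[Mm /eqP cM]] /and3P[euv uM vM].
  have [Mm' uvM] := matching_setU1 Mm euv uM vM.
  rewrite Mm' cardsU1 uvM cM add1n !eqxx /= andbT.
  by apply: contraTneq euv => ->; rewrite e_irr.
rewrite card_dep_pairs mulnC -sum_nat_const.
apply: leq_sum => M; rewrite inE => /andP[_ /eqP <-].
exact: card_oriented_pairs_le.
Qed.

End Matchings.

Local Open Scope ring_scope.

Lemma sum_indicator (R : pzSemiRingType) (T : finType) (P : pred T) :
  \sum_x ((P x)%:R : R) = #|[set x | P x]|%:R.
Proof.
rewrite -sum1_card natr_sum [RHS]big_mkcond /=; apply: eq_bigr => x _.
by rewrite inE; case: (P x).
Qed.

Section RealSymmetric.
Local Open Scope sesquilinear_scope.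
Variable R : rcfType.
Local Notation toC := (real_complex R).

Lemma real_complex_real (x : R) : toC x \is Num.real.
Proof. by rewrite realE !lecE /= eqxx /= le_total. Qed.

Lemma conj_real_complex (x : R) : (toC x)^* = toC x.
Proof. exact/CrealP/real_complex_real. Qed.

Lemma normalmx_real_sym n (B : 'M[R]_n) : B^T = B -> map_mx toC B \is normalmx.
Proof.
move=> Bsym; apply: symmetric_normalmx.
  apply/is_hermitianmxP; rewrite expr0 scale1r.
  by apply/matrixP => u w; rewrite !mxE -[in LHS]Bsym mxE.
by apply/(@mxOverP n n _ Num.real) => u w; rewrite mxE real_complex_real.
Qed.

Lemma spectral_diag_real_roots n (B : 'M[R]_n) (s : seq R) :
  B^T = B -> char_poly B = \prod_(x <- s) ('X - x%:P) ->
  forall j, exists2 x, x \in s & spectral_diag (map_mx toC B) 0 j = toC x.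
Proof.
move=> Bsym Bchar j; set Bc := map_mx toC B.
have Bnormal : Bc \is normalmx := normalmx_real_sym Bsym.
pose P := spectralmx Bc; have Punit : P \in unitmx := spectral_unit Bc.
have ev : eigenvalue Bc (spectral_diag Bc 0 j).
  apply/eigenvalueP; exists (row j P).
    rewrite [in LHS](orthomx_spectralP Bnormal) !mulmxA -row_mul mulmxV //.
    by rewrite row1 -rowE row_diag_mx -scalemxAl -rowE.
  apply/negP => /eqP r0.
  have := row_mul j P (invmx P); rewrite r0 mul0mx mulmxV // row1.
  by move/rowP/(_ j)/eqP; rewrite !mxE !eqxx oner_eq0.
move: ev; rewrite eigenvalue_root_char /Bc -map_char_poly Bchar rmorph_prod.
rewrite (eq_bigr (fun x => 'X - (toC x)%:P)) => [|x _ /=]; last first.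
  by rewrite map_polyXsubC.
by rewrite -(big_map toC xpredT (fun y => 'X - y%:P)) root_prod_XsubC => /mapP.
Qed.

(* Pass to C = R[i], diagonalize the (hermitian) complexification by a unitary
   matrix, and compare the two quadratic forms coordinatewise. *)
Lemma sym_quadform_ge n (B : 'M[R]_n) (s : seq R) (c : R) (v : 'rV[R]_n) :
  B^T = B -> char_poly B = \prod_(x <- s) ('X - x%:P) -> {in s, forall x, c <= x} ->
  c * (v *m v^T) 0 0 <= (v *m B *m v^T) 0 0.
Proof.
move=> Bsym Bchar c_le.
have eigD := spectral_diag_real_roots Bsym Bchar.
set Bc := map_mx toC B; set P := spectralmx Bc; set D := spectral_diag Bc.
have Bnormal : Bc \is normalmx := normalmx_real_sym Bsym.
have Pu : P \is unitarymx := spectral_unitarymx Bc.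
have invP : invmx P = P^t* := invmx_unitary Pu.
have PtP : P^t* *m P = 1%:M by rewrite -invP mulVmx ?spectral_unit.
pose vc := map_mx toC v; pose w := vc *m P^t*.
have vcT : (v^T)^toC = vc^t* by apply/matrixP => u z; rewrite !mxE conj_real_complex.
have wT : w^t* = P *m vc^t* by rewrite /w trmx_mul map_mxM trmxCK.
have entry (M : 'M[R]_1) : toC (M 0 0) = (map_mx toC M) 0 0 by rewrite mxE.
have EB : toC ((v *m B *m v^T) 0 0) = (w *m diag_mx D *m w^t*) 0 0.
  by rewrite entry !map_mxM vcT -/Bc {1}(orthomx_spectralP Bnormal) invP wT /w !mulmxA.
have E1 : toC ((v *m v^T) 0 0) = (w *m w^t*) 0 0.
  by rewrite entry !map_mxM vcT wT /w !mulmxA -[vc *m _ *m P]mulmxA PtP mulmx1.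
rewrite -lecR rmorphM /= EB E1; clearbody w.
rewrite mul_mx_diag !mxE big_distrr /=; apply: ler_sum => j _; rewrite !mxE.
have [x xs ->] := eigD j.
rewrite mulrAC [X in _ <= X]mulrC -subr_ge0 -mulrBl mulr_ge0 ?mul_conjC_ge0 //.
by rewrite -rmorphB ler0c subr_ge0 c_le.
Qed.

End RealSymmetric.

Lemma quadform_shift (R : comPzRingType) n (B : 'M[R]_n) (a o : 'rV[R]_n) (t : R) :
  o *m B = o -> B *m o^T = o^T ->
  ((a - t *: o) *m B *m (a - t *: o)^T) 0 0
    = (a *m B *m a^T) 0 0 - 2 * t * (a *m o^T) 0 0 + t ^+ 2 * (o *m o^T) 0 0.
Proof.
move=> oB Bo.
have oa : \tr (o *m a^T) = \tr (a *m o^T) by rewrite -mxtrace_tr trmx_mul trmxK.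
have toZ : (t *: o)^T = t *: o^T by apply/matrixP => i j; rewrite !mxE.
rewrite -!trace_mx11 mulmxBl -scalemxAl oB linearB /= toZ.
rewrite !mulmxBr -!scalemxAr !mulmxBl -!scalemxAl -[a *m B *m o^T]mulmxA Bo.
rewrite !(linearB, linearZ) /= oa; ring.
Qed.

Lemma sigma2_le_roots_ge (R : realType) N (M : 'M[R]_N) (eps : R) :
  sigma2_le M eps ->
  exists s : seq R,
    char_poly M = \prod_(x <- s) ('X - x%:P) /\ {in s, forall x, - eps <= x}.
Proof.
move=> [s [size_s sorted_s charM le_eps]]; exists s; split => // x xs.
have [i lt_i <-] : exists2 i, (i < size s)%N & nth 0 s i = x.
  by exists (index x s); [rewrite index_mem | rewrite nth_index].
have ge_trans : transitive (>=%R : rel R).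
  by move=> a b c /= h1 h2; apply: le_trans h2 h1.
have last_le : nth 0 s (size s).-1 <= nth 0 s i.
  apply: (sorted_leq_nth ge_trans (fun a => lexx a) 0 sorted_s); rewrite ?inE /=; lia.
apply: le_trans last_le; rewrite size_s lerNl.
move: le_eps; rewrite ge_max => /andP[_]; apply: le_trans.
by rewrite -normrN ler_norm.
Qed.

Section NormalizedAdjacency.
Variables (R : realType) (N : nat) (e : rel 'I_N) (d : nat).
Hypotheses (e_simple : simple_graph e) (e_regular : regular e d) (d_gt0 : (0 < d)%N).
Local Notation A := (norm_adjmx R e).

Lemma norm_adjmxE u w : A u w = (e u w)%:R / d%:R.
Proof. by rewrite !mxE !e_regular -expr2 sqr_sqrtr. Qed.

Lemma norm_adjmx_sym : A^T = A.
Proof.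
by case: e_simple => _ e_sym; apply/matrixP => u w; rewrite mxE !norm_adjmxE e_sym.
Qed.

Lemma norm_adjmx_ones : A *m const_mx 1 = const_mx 1 :> 'cV[R]_N.
Proof.
apply/matrixP => u z; rewrite [RHS]mxE mxE.
rewrite (eq_bigr (fun w => (e u w)%:R / d%:R)) => [|w _]; last first.
  by rewrite norm_adjmxE mxE mulr1.
rewrite -mulr_suml sum_indicator.
by have := e_regular u; rewrite /deg => ->; rewrite divff // pnatr_eq0 -lt0n.
Qed.

Lemma quadform_norm_adjmx_indicator (S : {set 'I_N}) (a : 'rV[R]_N) :
  a = \row_u (u \in S)%:R -> (a *m A *m a^T) 0 0 = #|arcs_within e S|%:R / d%:R.
Proof.
move=> ->; rewrite /arcs_within -sum_indicator.
rewrite -(pair_bigA _ (fun u w => ([&& e u w, u \in S & w \in S])%:R)).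
rewrite mxE [in RHS]exchange_big /= mulr_suml; apply: eq_bigr => w _.
rewrite mxE !mulr_suml; apply: eq_bigr => u _.
rewrite norm_adjmxE !mxE.
by case: (e u w); case: (u \in S); case: (w \in S);
  rewrite /= ?(mulr1, mulr0, mul0r, mul1r).
Qed.

(* The lower bound of the expander mixing lemma, obtained by testing A against
   the indicator vector of S minus its mean. *)
Lemma arcs_within_ge (eps : R) (S : {set 'I_N}) : (0 < N)%N ->
  spectral_expander e eps ->
  d%:R * (#|S|%:R ^+ 2 / N%:R - eps * (#|S|%:R - #|S|%:R ^+ 2 / N%:R))
    <= #|arcs_within e S|%:R.
Proof.
move=> N_gt0 /sigma2_le_roots_ge [s [charA s_ge]].
set z : R := #|S|%:R.
pose o : 'rV[R]_N := const_mx 1.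
pose a : 'rV[R]_N := \row_u (u \in S)%:R.
pose t := z / N%:R.
have Ao : A *m o^T = o^T by rewrite trmx_const norm_adjmx_ones.
have oA : o *m A = o by apply: trmx_inj; rewrite trmx_mul norm_adjmx_sym Ao.
have sum_S : \sum_u ((u \in S)%:R : R) = z.
  by rewrite sum_indicator; congr (_%:R); apply: eq_card => u; rewrite inE.
have aa : (a *m a^T) 0 0 = z.
  rewrite mxE -sum_S; apply: eq_bigr => u _; rewrite !mxE.
  by case: (u \in S); rewrite ?(mulr1, mulr0).
have ao : (a *m o^T) 0 0 = z.
  by rewrite mxE -sum_S; apply: eq_bigr => u _; rewrite !mxE mulr1.
have oo : (o *m o^T) 0 0 = N%:R.
  rewrite mxE (eq_bigr (fun=> 1)) => [|u _]; last by rewrite !mxE mulr1.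
  by rewrite sumr_const card_ord.
have := sym_quadform_ge (a - t *: o) norm_adjmx_sym charA s_ge.
rewrite -{1}[a - t *: o]mulmx1 !quadform_shift ?mulmx1 ?mul1mx //.
rewrite (quadform_norm_adjmx_indicator (erefl a)) aa ao oo.
have N_neq0 : N%:R != 0 :> R by rewrite pnatr_eq0 -lt0n.
have -> : 2 * t * z = 2 * (z ^+ 2 / N%:R) by rewrite /t; field.
have -> : t ^+ 2 * N%:R = z ^+ 2 / N%:R by rewrite /t; field.
set Y := z ^+ 2 / N%:R; set X : R := #|arcs_within e S|%:R.
have d_pos : 0 < d%:R :> R by rewrite ltr0n.
have -> : z - 2 * Y + Y = z - Y by ring.
rewrite mulNr => le_XY.
have -> : X = d%:R * (X / d%:R) by field; rewrite pnatr_eq0 -lt0n.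
rewrite ler_pM2l //; set Z := eps * (z - Y) in le_XY *; lra.
Qed.

End NormalizedAdjacency.

Lemma arcs_within_ge_of_card (R : realType) (n d k i : nat) (e : rel 'I_(2 * n))
    (eps : R) (S : {set 'I_(2 * n)}) :
  simple_graph e -> regular e d -> 0 <= eps -> eps * n%:R = k%:R ->
  spectral_expander e eps -> (i < n - k)%N -> #|S| = (2 * (n - i))%N ->
  (2 * (d * (n - i) * (n - k - i)) <= n * #|arcs_within e S|)%N.
Proof.
move=> e_simple e_regular eps_ge0 eps_n se lt_i card_S.
have [->|d_gt0] := posnP d; first by rewrite !mul0n muln0.
have N_gt0 : (0 < 2 * n)%N by lia.
have := arcs_within_ge e_simple e_regular d_gt0 S N_gt0 se.
rewrite card_S -(ler_nat R) !natrM !natrB; try lia.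
set nr : R := n%:R; set ir : R := i%:R; set kr : R := k%:R; set dr : R := d%:R.
set X : R := #|arcs_within e S|%:R; set L := dr * _ => le_LX.
have nr_pos : 0 < nr by rewrite ltr0n; lia.
have eps_i : eps * ir <= kr.
  by rewrite /kr -eps_n ler_wpM2l // /ir ler_nat; lia.
have ir_le : ir <= nr by rewrite ler_nat; lia.
have HL : L * nr = 2 * dr * (nr - ir) * (nr - ir - eps * ir).
  by rewrite /L; field; rewrite pnatr_eq0; lia.
apply: (@le_trans _ _ (L * nr)); last by rewrite mulrC ler_wpM2l ?ler0n.
rewrite HL !mulrA; apply: ler_wpM2l; last lra.
by rewrite !mulr_ge0 ?subr_ge0.
Qed.

Lemma nmatchings_step (R : realType) (n d k : nat) (e : rel 'I_(2 * n)) (eps : R) :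
  simple_graph e -> regular e d -> 0 <= eps -> eps * n%:R = k%:R ->
  spectral_expander e eps -> forall i, (i < n - k)%N ->
  (nmatchings e i * (d * (n - i) * (n - k - i)) <= nmatchings e i.+1 * (i.+1 * n))%N.
Proof.
move=> e_simple e_regular eps_ge0 eps_n se i lt_i.
have e_irr : irreflexive e by case: e_simple.
rewrite -(leq_pmul2l (isT : 0 < 2)%N) mulnCA.
apply: (@leq_trans (n * \sum_(M in matchings e i) #|arcs_within e (~: cover M)|)).
  rewrite /nmatchings -/(matchings e i) -sum_nat_const big_distrr /=.
  apply: leq_sum => M; rewrite inE => /andP[Mm /eqP card_M].
  apply: arcs_within_ge_of_card e_simple e_regular eps_ge0 eps_n se lt_i _.
  have := cardsC (cover M); rewrite (card_cover_matching e_irr Mm) card_M card_ord; lia.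
apply: leq_trans (leq_mul (leqnn n) (sum_arcs_uncovered_le e_irr i)) _.
by apply: eq_leq; ring.
Qed.

Lemma fact_leq_expn (k n : nat) : (k <= n)%N -> (k`! <= n ^ k)%N.
Proof. by elim: k => [//|k IH] lt_k; rewrite factS expnS leq_mul // IH // ltnW. Qed.

Lemma expn_le_fact_expR (R : realType) (n : nat) :
  (n ^ n)%:R <= n`!%:R * expR n%:R :> R.
Proof.
case: n => [|m]; first by rewrite expn0 fact0 mul1r expR0.
have fact_pos : 0 < (m.+1)`!%:R :> R by rewrite ltr0n fact_gt0.
rewrite -ler_pdivrMl // mulrC natrX.
by apply: le_trans (expR_ge1Dxn m (ler0n _ _)); rewrite lerDr.
Qed.

Lemma expn_le_ffact_expR (R : realType) (n j : nat) : (j <= n)%N ->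
  (n ^ j)%:R <= (n ^_ j)%:R * expR n%:R :> R.
Proof.
move=> le_jn; have fact_pos : 0 < (n - j)`!%:R :> R by rewrite ltr0n fact_gt0.
rewrite -(ler_pM2r fact_pos) mulrAC -!natrM ffact_fact //.
apply: le_trans (expn_le_fact_expR R n); rewrite ler_nat.
by rewrite -{4}(subnKC le_jn) expnD leq_mul2l fact_leq_expn ?leq_subr ?orbT.
Qed.

Lemma ler_expR_of_ffact (R : realType) (n k d f : nat) : (k <= n)%N ->
  (d ^ (n - k) * n ^_ (n - k) <= f * n ^ (n - k))%N ->
  (d%:R / expR 1) ^+ (n - k) * expR (- 2 * k%:R) <= f%:R :> R.
Proof.
move=> le_kn le_f; set j := (n - k)%N.
have nj_pos : 0 < (n ^ j)%:R :> R.
  by rewrite ltr0n expn_gt0 /j; case: n le_kn {le_f j}.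
have le_ffact : (n ^ j)%:R * expR (- (j + 2 * k)%N%:R) <= (n ^_ j)%:R :> R.
  rewrite expRN ler_pdivrMr ?expR_gt0 //.
  apply: le_trans (expn_le_ffact_expR R (leq_subr k n)) _.
  by rewrite ler_wpM2l // ler_expR ler_nat /j; lia.
have -> : (d%:R / expR 1) ^+ j * expR (- 2 * k%:R)
          = d%:R ^+ j * expR (- (j + 2 * k)%N%:R) :> R.
  rewrite expr_div_n -expRM_natl mulr1 natrD natrM opprD.
  by rewrite -mulrA -expRN -expRD; congr (_ * expR _); ring.
rewrite -(ler_pM2r nj_pos) -mulrA (mulrC (expR _)).
apply: le_trans (_ : _ <= d%:R ^+ j * (n ^_ j)%:R) _.
  by rewrite ler_wpM2l // exprn_ge0.
by rewrite -natrX -!natrM ler_nat.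
Qed.

Theorem lemma4p1 (R : realType) (n d k : nat) (e : rel 'I_(2 * n)) (eps : R) :
  simple_graph e -> regular e d ->
  0 < eps -> eps < 2^-1 ->
  eps * n%:R = k%:R ->
  spectral_expander e eps ->
  ((d%:R / expR 1) ^+ (n - k) * expR (- 2 * k%:R) <= (nmatchings e (n - k))%:R :> R).
Proof.
move=> e_simple e_regular eps_gt0 eps_lt_half eps_n se.
have le_kn : (k <= n)%N.
  rewrite -(ler_nat R) -eps_n ler_piMl //.
  by apply: le_trans (ltW eps_lt_half) _; rewrite invf_le1 // ler1n.
apply: ler_expR_of_ffact => //.
have nmatchings0 : (0 < nmatchings e 0)%N.
  apply/card_gt0P; exists set0; rewrite inE /is_matching sub0set cards0 eqxx andbT.
  by apply/trivIsetP => A B; rewrite inE.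
have := prod_chain_le (nmatchings_step e_simple e_regular (ltW eps_gt0) eps_n se).
rewrite !big_split /= !prod_nat_const !card_ord -!ffact_prod ffactnn.
have -> : (\prod_(i < n - k) i.+1 = (n - k)`!)%N.
  by rewrite fact_prod big_add1 /= big_mkord.
move=> chain; rewrite -(leq_pmul2r (fact_gt0 (n - k))).
apply: leq_trans (leq_pmull _ nmatchings0) (leq_trans chain _).
by apply: eq_leq; ring.
Qed.
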